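(* Let $p^*\in(0,1)$ be the threshold belief of the insurance problem (the unique $p^*$ such that not insuring is optimal for $p<p^*$, the insuree is indifferent between not insuring and insuring at a positive indemnity at $p^*$, and insuring at a positive indemnity $\hat I(p)$ is strictly optimal for $p>p^*$). For $p\in(0,1)$ and small $\varepsilon>0$ define $\mathrm{VoI}(\varepsilon)=\tfrac12 v(p+\varepsilon)+\tfrac12 v(p-\varepsilon)-v(p)$. Then: (1) if $p<p^*$, $\mathrm{VoI}(\varepsilon)=0$ for all sufficiently small $\varepsilon>0$; (2) if $p=p^*$, there is a constant $C^*>0$ with $\mathrm{VoI}(\varepsilon)\sim C^*\varepsilon$ as $\varepsilon\to0$; (3) if $p>p^*$, there is a constant $C(p)>0$ with $\mathrm{VoI}(\varepsilon)\sim C(p)\varepsilon^2$ as $\varepsilon\to0$.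
   Context: Insurance model with parameters $\alpha\in(0,1)$, $f>0$, $\varpi>0$, $R>0$: premium $P(I)=\alpha I+f$, utility $u(w)=1-e^{-Rw}$; for probability of loss $q\in[0,1]$, $U_0(q)=(1-q)(1-e^{-R\varpi})$ (no insurance) and $U(q,I)=1-qe^{-R(I-P(I))}-(1-q)e^{-R(\varpi-P(I))}$ (insurance with indemnity $I\ge0$). The value function is $v(q)=\max\{U_0(q),\sup_{I\ge0}U(q,I)\}$. Here $f(\varepsilon)\sim g(\varepsilon)$ means $f(\varepsilon)/g(\varepsilon)\to1$. *)

From Stdlib Require Import Reals Lra.
Open Scope R_scope.

Definition premium (alpha f I : R) : R := alpha * I + f.

Definition util (Ra w : R) : R := 1 - exp (- (Ra * w)).

Definition U0 (w Ra q : R) : R := (1 - q) * (1 - exp (- (Ra * w))).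

Definition Uins (alpha f w Ra q I : R) : R :=
  1 - q * exp (- (Ra * (I - premium alpha f I)))
    - (1 - q) * exp (- (Ra * (w - premium alpha f I))).

Definition attainable (alpha f w Ra q : R) : R -> Prop :=
  fun y => y = U0 w Ra q \/ exists I, 0 <= I /\ y = Uins alpha f w Ra q I.

Definition is_value_function (alpha f w Ra : R) (v : R -> R) : Prop :=
  forall q, 0 <= q <= 1 -> is_lub (attainable alpha f w Ra q) (v q).

Definition is_threshold (alpha f w Ra pstar : R) : Prop :=
  0 < pstar < 1 /\
  (forall q, 0 <= q < pstar -> forall I, 0 <= I -> Uins alpha f w Ra q I <= U0 w Ra q) /\
  (exists I, 0 < I /\ Uins alpha f w Ra pstar I = U0 w Ra pstar /\
     forall J, 0 <= J -> Uins alpha f w Ra pstar J <= U0 w Ra pstar) /\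
  (forall q, pstar < q < 1 -> exists Ihat, 0 < Ihat /\
     U0 w Ra q < Uins alpha f w Ra q Ihat /\
     forall J, 0 <= J -> Uins alpha f w Ra q J <= Uins alpha f w Ra q Ihat).

Definition VoI (v : R -> R) (p eps : R) : R :=
  / 2 * v (p + eps) + / 2 * v (p - eps) - v p.

Definition asymp_equiv_0plus (g h : R -> R) : Prop :=
  forall eta, 0 < eta -> exists delta, 0 < delta /\
    forall eps, 0 < eps < delta -> Rabs (g eps / h eps - 1) < eta.

From Stdlib Require Import Reals Lra Classical.
From Coquelicot Require Import Coquelicot.
Open Scope R_scope.

(* The value function [v] is the least upper bound of utilities that are all
   affine in the belief [q], hence it is convex, and [VoI v p eps] is half of
   its symmetric second difference at [p].
   - Below the threshold, [v] coincides with the affine function [U0] on a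
     neighbourhood of [p], so the second difference vanishes.
   - At the threshold, [v = U0] on the left, while on the right the excess
     [v - U0] is convex, vanishes at [pstar] and dominates the linear gain of
     the indifference indemnity; its chord slopes therefore decrease to a
     positive limit [L], and [VoI ~ (L/2) eps].
   - Above the threshold, the optimal indemnity solves a first-order condition
     in closed form, giving [v q = 1 - K q^alpha (1-q)^(1-alpha)] there; a
     second-order Taylor estimate of this smooth strictly concave function
     gives [VoI ~ C eps^2]. *)

Lemma asymp_equiv_of_rel_error (g h : R -> R) :
  (forall eps, 0 < eps -> 0 < h eps) ->
  (forall eta, 0 < eta -> exists delta, 0 < delta /\
     forall eps, 0 < eps < delta -> Rabs (g eps - h eps) <= eta * h eps) ->
  asymp_equiv_0plus g h.
Proof.
  intros Hpos Herr eta Heta.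
  destruct (Herr (eta / 2)) as [delta [Hdelta Hbound]]; [lra|].
  exists delta; split; [exact Hdelta|].
  intros eps Heps.
  assert (Hh := Hpos eps (proj1 Heps)).
  specialize (Hbound eps Heps).
  replace (g eps / h eps - 1) with ((g eps - h eps) * / h eps) by (field; lra).
  rewrite Rabs_mult, Rabs_inv, (Rabs_right (h eps)) by lra.
  apply (Rmult_lt_reg_r (h eps)); [lra|].
  rewrite Rmult_assoc, Rinv_l, Rmult_1_r by lra.
  nra.
Qed.

Lemma monotone_right_limit (G : R -> R) (d0 m : R) :
  0 < d0 ->
  (forall e d, 0 < e <= d -> d < d0 -> G e <= G d) ->
  (forall d, 0 < d < d0 -> m <= G d) ->
  exists L, m <= L /\ forall eta, 0 < eta -> exists delta, 0 < delta /\
    forall eps, 0 < eps < delta -> L <= G eps <= L + eta.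
Proof.
  intros Hd0 Hmono Hlow.
  set (S := fun y => exists d, 0 < d < d0 /\ y = - G d).
  assert (Sbound : bound S).
  { exists (- m). intros y [d [Hd ->]]. assert (Hm := Hlow d Hd). lra. }
  assert (Sne : exists y, S y).
  { exists (- G (d0 / 2)), (d0 / 2). split; [lra | reflexivity]. }
  destruct (completeness S Sbound Sne) as [M [HMub HMlub]].
  assert (HLG : forall d, 0 < d < d0 -> - M <= G d).
  { intros d Hd. assert (- G d <= M) by (apply HMub; exists d; auto). lra. }
  exists (- M); split.
  { assert (M <= - m); [|lra].
    apply HMlub. intros y [d [Hd ->]]. assert (Hm := Hlow d Hd). lra. }
  intros eta Heta.
  destruct (classic (exists d, 0 < d < d0 /\ G d <= - M + eta)) as [[d1 [Hd1 HG1]] | Hnone].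
  - exists d1; split; [lra|].
    intros eps Heps. split; [apply HLG; lra|].
    assert (G eps <= G d1) by (apply Hmono; lra). lra.
  - exfalso.
    assert (M <= M - eta); [|lra].
    apply HMlub. intros y [d [Hd ->]].
    destruct (Rle_or_lt (G d) (- M + eta)) as [Hle | Hgt]; [|lra].
    exfalso; apply Hnone; exists d; auto.
Qed.

Definition convex_on (lo hi : R) (F : R -> R) : Prop :=
  forall x y t, lo <= x <= hi -> lo <= y <= hi -> 0 <= t <= 1 ->
    F ((1 - t) * x + t * y) <= (1 - t) * F x + t * F y.

Lemma convex_chord_slope (lo hi : R) (F : R -> R) (a e d : R) :
  convex_on lo hi F -> lo <= a -> a + d <= hi -> 0 < e <= d ->
  (F (a + e) - F a) / e <= (F (a + d) - F a) / d.
Proof.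
  intros Hconv Ha Hd He.
  assert (Ht : 0 <= e / d <= 1).
  { split; [apply Rlt_le, Rdiv_lt_0_compat; lra | apply Rle_div_l; lra]. }
  assert (Hc := Hconv a (a + d) (e / d) ltac:(lra) ltac:(lra) Ht).
  replace ((1 - e / d) * a + e / d * (a + d)) with (a + e) in Hc by (field; lra).
  apply Rle_div_l; [lra|].
  replace ((F (a + d) - F a) / d * e) with (e / d * F (a + d) - e / d * F a) by (field; lra).
  replace ((1 - e / d) * F a) with (F a - e / d * F a) in Hc by ring.
  lra.
Qed.

Lemma symmetric_second_difference (F F1 F2 : R -> R) (p r : R) :
  0 < r ->
  (forall t, p - r < t < p + r -> is_derive F t (F1 t)) ->
  (forall t, p - r < t < p + r -> is_derive F1 t (F2 t)) ->
  continuity_pt F2 p ->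
  forall eta, 0 < eta -> exists delta, 0 < delta /\ forall eps, 0 < eps < delta ->
    Rabs (F (p + eps) + F (p - eps) - 2 * F p - F2 p * eps ^ 2) <= eta * eps ^ 2.
Proof.
  intros Hr HF HF1 Hcont eta Heta.
  assert (Hcont1 : forall t, p - r < t < p + r -> continuity_pt F1 t).
  { intros t Ht. apply continuity_pt_filterlim, (ex_derive_continuous (V := R_NormedModule)).
    exists (F2 t). apply HF1, Ht. }
  destruct (Hcont (eta / 2)) as [d1 [Hd1 HF2near]]; [lra|].
  exists (Rmin r d1); split; [apply Rmin_pos; lra|].
  intros eps [Heps Hepsd].
  assert (Hr' : eps < r) by (eapply Rlt_le_trans; [exact Hepsd | apply Rmin_l]).
  assert (Hd' : eps < d1) by (eapply Rlt_le_trans; [exact Hepsd | apply Rmin_r]).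
  (* [rho t] is the error at radius [t]; its derivative [rho1] is [o(t)]. *)
  set (rho := fun t => F (p + t) + F (p - t) - 2 * F p - F2 p * t ^ 2).
  set (rho1 := fun t => F1 (p + t) - F1 (p - t) - 2 * F2 p * t).
  assert (Hrho : forall t, - r < t < r -> is_derive rho t (rho1 t)).
  { intros t Ht. unfold rho, rho1.
    assert (Ha := HF (p + t) ltac:(lra)). assert (Hb := HF (p - t) ltac:(lra)).
    auto_derive.
    - repeat split; [exists (F1 (p + t)) | exists (F1 (p - t))]; assumption.
    - change (fun x : R => F x) with F. replace (p + - t) with (p - t) by ring.
      rewrite (is_derive_unique _ _ _ Ha), (is_derive_unique _ _ _ Hb). ring. }
  assert (Hrho1 : forall t, 0 <= t <= eps -> Rabs (rho1 t) <= eta * t).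
  { intros t Ht. destruct (Req_dec t 0) as [-> | Ht0].
    - unfold rho1. rewrite Rplus_0_r, Rminus_0_r.
      replace (F1 p - F1 p - 2 * F2 p * 0) with 0 by ring. rewrite Rabs_R0. lra.
    - destruct (MVT_gen F1 (p - t) (p + t) F2) as [c [Hc Hmvt]];
        rewrite ?Rmin_left, ?Rmax_right in * by lra.
      + intros x Hx. apply HF1. lra.
      + intros x Hx. apply Hcont1. lra.
      + assert (HF2c : Rabs (F2 c - F2 p) < eta / 2).
        { destruct (Req_dec c p) as [-> | Hcp]; [rewrite Rminus_diag, Rabs_R0; lra|].
          apply (HF2near c). split; [split; [exact I | auto] |].
          simpl; unfold R_dist. apply Rabs_def1; lra. }
        unfold rho1. rewrite Hmvt.
        replace (F2 c * (p + t - (p - t)) - 2 * F2 p * t) with (2 * t * (F2 c - F2 p)) by ring.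
        rewrite Rabs_mult, Rabs_right by lra. nra. }
  destruct (MVT_gen rho 0 eps rho1) as [c [Hc Hmvt]];
    rewrite ?Rmin_left, ?Rmax_right in * by lra.
  - intros x Hx. apply Hrho. lra.
  - intros x Hx. apply continuity_pt_filterlim, (ex_derive_continuous (V := R_NormedModule)).
    exists (rho1 x). apply Hrho. lra.
  - assert (Hrho0 : rho 0 = 0) by (unfold rho; rewrite Rplus_0_r, Rminus_0_r; ring).
    rewrite Hrho0, !Rminus_0_r in Hmvt.
    change (Rabs (rho eps) <= eta * eps ^ 2).
    rewrite Hmvt, Rabs_mult, (Rabs_right eps) by lra.
    assert (Hb := Hrho1 c Hc).
    apply Rle_trans with (eta * c * eps); [apply Rmult_le_compat_r; lra|].
    assert (eta * c <= eta * eps) by (apply Rmult_le_compat_l; lra).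
    nra.
Qed.

(* The comparison function [q^alpha (1-q)^(1-alpha)] and its first two
   derivatives on [(0, 1)]. *)
Definition phi (al q : R) : R := exp (al * ln q + (1 - al) * ln (1 - q)).
Definition phi1 (al q : R) : R := phi al q * (al / q - (1 - al) / (1 - q)).
Definition phi2 (al q : R) : R :=
  - (phi al q * (al * (1 - al)) / (q ^ 2 * (1 - q) ^ 2)).

Lemma phi_derive (al q : R) : 0 < q < 1 -> is_derive (phi al) q (phi1 al q).
Proof.
  intros Hq. unfold phi1, phi. auto_derive; [lra|].
  replace (1 + - q) with (1 - q) by ring. field. lra.
Qed.

Lemma phi1_derive (al q : R) : 0 < q < 1 -> is_derive (phi1 al) q (phi2 al q).
Proof.
  intros Hq. unfold phi2, phi1, phi. auto_derive; [repeat split; lra|].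
  replace (1 + - q) with (1 - q) by ring. field. lra.
Qed.

Lemma phi2_continuous (al q : R) : 0 < q < 1 -> continuity_pt (phi2 al) q.
Proof.
  intros Hq. apply continuity_pt_filterlim, (ex_derive_continuous (V := R_NormedModule)).
  unfold phi2, phi. auto_derive. repeat split; try lra.
  assert (0 < q * (q * 1) * ((1 + - q) * ((1 + - q) * 1))); [|lra].
  repeat apply Rmult_lt_0_compat; lra.
Qed.

Lemma phi2_neg (al q : R) : 0 < al < 1 -> 0 < q < 1 -> phi2 al q < 0.
Proof.
  intros Hal Hq. unfold phi2.
  assert (0 < phi al q) by apply exp_pos.
  assert (0 < q ^ 2 * (1 - q) ^ 2) by (apply Rmult_lt_0_compat; apply pow_lt; lra).
  assert (0 < phi al q * (al * (1 - al)) / (q ^ 2 * (1 - q) ^ 2)); [|lra].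
  apply Rdiv_lt_0_compat; [apply Rmult_lt_0_compat; [lra | apply Rmult_lt_0_compat; lra] | lra].
Qed.

Section ValueFunction.

Variables (al f w Ra : R) (v : R -> R).
Hypothesis Hv : is_value_function al f w Ra v.

Lemma value_ge_Uins (q I : R) : 0 <= q <= 1 -> 0 <= I -> Uins al f w Ra q I <= v q.
Proof. intros Hq HI. apply (proj1 (Hv q Hq)). right; exists I; auto. Qed.

Lemma value_eq_max (q y : R) : 0 <= q <= 1 -> attainable al f w Ra q y ->
  (forall z, attainable al f w Ra q z -> z <= y) -> v q = y.
Proof.
  intros Hq Hy Hmax. destruct (Hv q Hq) as [Hub Hlub].
  apply Rle_antisym; [apply Hlub; exact Hmax | apply Hub, Hy].
Qed.

Lemma value_eq_U0 (q : R) : 0 <= q <= 1 ->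
  (forall I, 0 <= I -> Uins al f w Ra q I <= U0 w Ra q) -> v q = U0 w Ra q.
Proof.
  intros Hq Hno. apply value_eq_max; [exact Hq | left; reflexivity |].
  intros z [-> | [I [HI ->]]]; [lra | apply Hno, HI].
Qed.

(* Every attainable utility is affine in the belief, so their supremum [v] is
   convex. *)
Lemma value_convex : convex_on 0 1 v.
Proof.
  intros q1 q2 t H1 H2 Ht.
  assert (Hq : 0 <= (1 - t) * q1 + t * q2 <= 1) by nra.
  apply (proj2 (Hv _ Hq)).
  destruct (Hv _ H1) as [Hub1 _]. destruct (Hv _ H2) as [Hub2 _].
  intros y [-> | [I [HI ->]]].
  - assert (a1 := Hub1 _ (or_introl eq_refl)). assert (a2 := Hub2 _ (or_introl eq_refl)).
    replace (U0 w Ra ((1 - t) * q1 + t * q2))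
      with ((1 - t) * U0 w Ra q1 + t * U0 w Ra q2) by (unfold U0; ring).
    apply Rplus_le_compat; apply Rmult_le_compat_l; lra.
  - assert (a1 : Uins al f w Ra q1 I <= v q1) by (apply Hub1; right; exists I; auto).
    assert (a2 : Uins al f w Ra q2 I <= v q2) by (apply Hub2; right; exists I; auto).
    replace (Uins al f w Ra ((1 - t) * q1 + t * q2) I)
      with ((1 - t) * Uins al f w Ra q1 I + t * Uins al f w Ra q2 I) by (unfold Uins; ring).
    apply Rplus_le_compat; apply Rmult_le_compat_l; lra.
Qed.

(* Hence so is the excess of [v] over the affine no-insurance utility. *)
Lemma excess_convex : convex_on 0 1 (fun q => v q - U0 w Ra q).
Proof.
  intros q1 q2 t H1 H2 Ht.
  assert (Hc := value_convex q1 q2 t H1 H2 Ht).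
  replace (U0 w Ra ((1 - t) * q1 + t * q2))
    with ((1 - t) * U0 w Ra q1 + t * U0 w Ra q2) by (unfold U0; ring).
  lra.
Qed.

End ValueFunction.

Definition exp_rem (t : R) : R := exp t - 1 - t.

Lemma exp_rem_nonneg (t : R) : 0 <= exp_rem t.
Proof. unfold exp_rem. assert (H := exp_ineq1_le t). lra. Qed.

Lemma exp_rem_pos (t : R) : t <> 0 -> 0 < exp_rem t.
Proof. intros Ht. unfold exp_rem. assert (H := exp_ineq1 t Ht). lra. Qed.

Section Indemnity.

Variables (al f w Ra : R).

Definition loss_term (I : R) : R := exp (- (Ra * (I - premium al f I))).
Definition safe_term (I : R) : R := exp (- (Ra * (w - premium al f I))).

Lemma Uins_expand (q I : R) :
  Uins al f w Ra q I = 1 - q * loss_term I - (1 - q) * safe_term I.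
Proof. reflexivity. Qed.

(* Changing the indemnity from [J] to [I] rescales both disutilities by an
   exponential factor: the net wealth is affine in the indemnity. *)
Lemma loss_term_shift (I J : R) :
  loss_term I = loss_term J * exp (- (Ra * (1 - al) * (I - J))).
Proof. unfold loss_term. rewrite <- exp_plus. f_equal. unfold premium. ring. Qed.

Lemma safe_term_shift (I J : R) :
  safe_term I = safe_term J * exp (Ra * al * (I - J)).
Proof. unfold safe_term. rewrite <- exp_plus. f_equal. unfold premium. ring. Qed.

(* Marginal utility of indemnity: the derivative of [Uins q] at [J]. *)
Definition marginal (q J : R) : R :=
  Ra * (1 - al) * q * loss_term J - Ra * al * (1 - q) * safe_term J.

(* Exact second-order expansion of [Uins q] in the indemnity; both remainders
   enter with a nonpositive sign, which is the concavity of [Uins q]. *)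
Lemma Uins_expansion (q I J : R) :
  Uins al f w Ra q I = Uins al f w Ra q J + marginal q J * (I - J)
    - q * loss_term J * exp_rem (- (Ra * (1 - al) * (I - J)))
    - (1 - q) * safe_term J * exp_rem (Ra * al * (I - J)).
Proof.
  rewrite !Uins_expand, (loss_term_shift I J), (safe_term_shift I J).
  unfold marginal, exp_rem. ring.
Qed.

Lemma Uins_tangent (q I J : R) : 0 <= q <= 1 ->
  Uins al f w Ra q I <= Uins al f w Ra q J + marginal q J * (I - J).
Proof.
  intros Hq. rewrite (Uins_expansion q I J).
  assert (0 <= q * loss_term J * exp_rem (- (Ra * (1 - al) * (I - J)))).
  { apply Rmult_le_pos; [apply Rmult_le_pos; [lra | apply Rlt_le, exp_pos] | apply exp_rem_nonneg]. }
  assert (0 <= (1 - q) * safe_term J * exp_rem (Ra * al * (I - J))).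
  { apply Rmult_le_pos; [apply Rmult_le_pos; [lra | apply Rlt_le, exp_pos] | apply exp_rem_nonneg]. }
  lra.
Qed.

Lemma Uins_tangent_strict (q I J : R) : 0 <= q < 1 -> 0 < al -> 0 < Ra -> J < I ->
  Uins al f w Ra q I < Uins al f w Ra q J + marginal q J * (I - J).
Proof.
  intros Hq Hal HRa HJI. rewrite (Uins_expansion q I J).
  assert (0 <= q * loss_term J * exp_rem (- (Ra * (1 - al) * (I - J)))).
  { apply Rmult_le_pos; [apply Rmult_le_pos; [lra | apply Rlt_le, exp_pos] | apply exp_rem_nonneg]. }
  assert (0 < (1 - q) * safe_term J * exp_rem (Ra * al * (I - J))).
  { apply Rmult_lt_0_compat; [apply Rmult_lt_0_compat; [lra | apply exp_pos] |].
    apply exp_rem_pos, Rgt_not_eq. repeat apply Rmult_lt_0_compat; lra. }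
  lra.
Qed.

Lemma marginal_pos_of_gain (q I : R) : 0 <= q < 1 -> 0 < al -> 0 < Ra -> 0 < I ->
  Uins al f w Ra q 0 <= Uins al f w Ra q I -> 0 < marginal q 0.
Proof.
  intros Hq Hal HRa HI Hgain.
  destruct (Rlt_or_le 0 (marginal q 0)) as [Hpos | Hle]; [exact Hpos | exfalso].
  assert (Hs := Uins_tangent_strict q I 0 Hq Hal HRa HI).
  assert (marginal q 0 * (I - 0) <= 0) by (apply Rmult_le_0_r; lra).
  lra.
Qed.

(* Closed-form solution of the first-order condition [marginal q I = 0]:
   [exp (Ra * Istar q) = ratio * q / (1 - q)]. *)
Definition ratio : R := (1 - al) * loss_term 0 / (al * safe_term 0).
Definition Istar (q : R) : R := ln (ratio * q / (1 - q)) / Ra.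
Definition Kconst : R := loss_term 0 * exp (- (1 - al) * ln ratio) / al.

Section InteriorOptimum.

Hypotheses (Hal : 0 < al < 1) (HRa : 0 < Ra).
Variable q : R.
Hypotheses (Hq : 0 < q < 1) (Hmarg : 0 < marginal q 0).

Let x0 := loss_term 0.
Let y0 := safe_term 0.
Let s := ratio * q / (1 - q).

Lemma ratio_pos : 0 < ratio.
Proof.
  unfold ratio. apply Rdiv_lt_0_compat; apply Rmult_lt_0_compat; try lra; apply exp_pos.
Qed.

Lemma s_pos : 0 < s.
Proof.
  unfold s. apply Rdiv_lt_0_compat; [apply Rmult_lt_0_compat; [apply ratio_pos|] |]; lra.
Qed.

Lemma Ra_Istar : Ra * Istar q = ln s.
Proof. unfold Istar. fold s. field. lra. Qed.

(* [s > 1] is a restatement of positive marginal utility at [0]. *)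
Lemma s_gt_1 : 1 < s.
Proof.
  assert (Px : 0 < x0) by apply exp_pos. assert (Py : 0 < y0) by apply exp_pos.
  assert (Hden : 0 < Ra * al * y0 * (1 - q)) by (repeat apply Rmult_lt_0_compat; lra).
  replace s with (1 + marginal q 0 / (Ra * al * y0 * (1 - q))).
  - assert (0 < marginal q 0 / (Ra * al * y0 * (1 - q))) by (apply Rdiv_lt_0_compat; lra). lra.
  - unfold s, ratio, marginal. fold x0 y0. field. repeat split; lra.
Qed.

Lemma Istar_pos : 0 < Istar q.
Proof.
  assert (Hln : 0 < ln s) by (rewrite <- ln_1; apply ln_increasing; [lra | apply s_gt_1]).
  rewrite <- Ra_Istar in Hln. nra.
Qed.

Let E := exp (- (1 - al) * ln s).

(* Both disutilities at [Istar q], in terms of [E = s^(-(1-alpha))]. *)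
Lemma loss_term_Istar : loss_term (Istar q) = x0 * E.
Proof.
  unfold x0, E. rewrite (loss_term_shift (Istar q) 0). f_equal. f_equal.
  rewrite <- Ra_Istar. ring.
Qed.

Lemma safe_term_Istar : safe_term (Istar q) = y0 * s * E.
Proof.
  rewrite (safe_term_shift (Istar q) 0). fold y0.
  rewrite (Rmult_assoc y0 s E). f_equal. unfold E.
  replace (Ra * al * (Istar q - 0)) with (ln s + - (1 - al) * ln s)
    by (rewrite <- Ra_Istar; ring).
  rewrite exp_plus, exp_ln by apply s_pos. reflexivity.
Qed.

Lemma ratio_balance : al * y0 * ratio = (1 - al) * x0.
Proof.
  assert (Py : 0 < y0) by apply exp_pos.
  unfold ratio. fold x0 y0. field. lra.
Qed.

Lemma marginal_Istar : marginal q (Istar q) = 0.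
Proof.
  unfold marginal. rewrite loss_term_Istar, safe_term_Istar.
  replace (Ra * al * (1 - q) * (y0 * s * E)) with (Ra * E * q * (al * y0 * ratio))
    by (unfold s; field; lra).
  rewrite ratio_balance. ring.
Qed.

Lemma Uins_Istar : Uins al f w Ra q (Istar q) = 1 - Kconst * phi al q.
Proof.
  assert (Hs := s_pos).
  assert (HqE : q * E = exp (- (1 - al) * ln ratio) * phi al q).
  { assert (Hlns : ln s = ln ratio + ln q - ln (1 - q)).
    { assert (Hr := ratio_pos). unfold s, Rdiv.
      rewrite (ln_mult (ratio * q)), (ln_mult ratio q), ln_Rinv
        by first [exact Hr | lra | apply Rmult_lt_0_compat; lra | apply Rinv_0_lt_compat; lra].
      ring. }
    unfold E, phi. rewrite <- (exp_ln q) at 1 by lra.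
    rewrite <- !exp_plus, Hlns. f_equal. ring. }
  rewrite Uins_expand, loss_term_Istar, safe_term_Istar.
  replace ((1 - q) * (y0 * s * E)) with (q * E * (y0 * ratio)) by (unfold s; field; lra).
  replace (y0 * ratio) with ((1 - al) * x0 / al)
    by (apply (Rmult_eq_reg_l al); [rewrite <- Rmult_assoc, ratio_balance; field |]; lra).
  unfold Kconst. fold x0.
  replace (1 - q * (x0 * E) - q * E * ((1 - al) * x0 / al)) with (1 - q * E * x0 / al)
    by (field; lra).
  rewrite HqE. field. lra.
Qed.

(* The first-order condition and concavity make [Istar q] a global maximiser. *)
Lemma Istar_optimal (J : R) : Uins al f w Ra q J <= Uins al f w Ra q (Istar q).
Proof.
  assert (Ht := Uins_tangent q J (Istar q) ltac:(lra)).
  rewrite marginal_Istar in Ht. lra.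
Qed.

End InteriorOptimum.

Lemma Kconst_pos : 0 < al -> 0 < Kconst.
Proof.
  intros Hal. unfold Kconst.
  apply Rdiv_lt_0_compat; [apply Rmult_lt_0_compat; apply exp_pos | exact Hal].
Qed.

End Indemnity.

Section Threshold.

Variables (al f w Ra : R) (v : R -> R) (pstar : R).
Hypotheses (Hal : 0 < al < 1) (Hf : 0 < f) (HRa : 0 < Ra).
Hypothesis Hv : is_value_function al f w Ra v.
Hypothesis Hthr : is_threshold al f w Ra pstar.

Lemma value_below_threshold (q : R) : 0 <= q < pstar -> v q = U0 w Ra q.
Proof.
  destruct Hthr as [Hps [Hbelow _]]. intros Hq.
  apply (value_eq_U0 al f w Ra v Hv); [lra | apply Hbelow, Hq].
Qed.

Lemma value_at_threshold : v pstar = U0 w Ra pstar.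
Proof.
  destruct Hthr as [Hps [_ [[I0 [_ [_ Hbest]]] _]]].
  apply (value_eq_U0 al f w Ra v Hv); [lra | exact Hbest].
Qed.

(* Above the threshold insuring is strictly better than not insuring, so the
   marginal utility of indemnity at [0] is positive and the optimum is the
   interior critical point [Istar q], with value [1 - K phi q]. *)
Lemma value_above_threshold (q : R) :
  pstar < q < 1 -> v q = 1 - Kconst al f w Ra * phi al q.
Proof.
  destruct Hthr as [Hps [_ [_ Habove]]]. intros Hq.
  destruct (Habove q Hq) as [Ih [HIh [Hgain Hopt]]].
  assert (Hmarg : 0 < marginal al f w Ra q 0).
  { apply (marginal_pos_of_gain _ _ _ _ q Ih); try lra. apply Hopt. lra. }
  assert (Hbest := Istar_optimal al f w Ra Hal HRa q ltac:(lra)).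
  rewrite <- (Uins_Istar al f w Ra Hal HRa q ltac:(lra)).
  apply (value_eq_max al f w Ra v Hv); [lra | |].
  - right. exists (Istar al f w Ra q).
    split; [apply Rlt_le, Istar_pos; auto; lra | reflexivity].
  - intros z [-> | [J [_ ->]]]; [| apply Hbest].
    specialize (Hbest Ih). lra.
Qed.

(* The indifference indemnity [I0] yields a gain over no insurance which is
   affine in the belief, vanishes at [pstar] and is negative at [0]: it grows
   linearly with a positive slope [D] to the right of [pstar]. *)
Lemma gain_slope_at_threshold : exists D, 0 < D /\
  forall d, 0 < d <= 1 - pstar -> D * d <= v (pstar + d) - U0 w Ra (pstar + d).
Proof.
  destruct Hthr as [Hps [_ [[I0 [HI0 [Hindiff _]]] _]]].
  set (a := 1 - loss_term al f Ra I0).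
  set (b := safe_term al f w Ra I0 - exp (- (Ra * w))).
  assert (Hgain : forall q, Uins al f w Ra q I0 - U0 w Ra q = q * a - (1 - q) * b).
  { intro q. unfold Uins, U0, a, b, loss_term, safe_term. ring. }
  assert (Hb : 0 < b).
  { unfold b, safe_term. apply Rlt_0_minus, exp_increasing. unfold premium.
    assert (0 < Ra * (al * I0 + f)) by (apply Rmult_lt_0_compat; nra). nra. }
  assert (Hzero := Hgain pstar). rewrite Hindiff, Rminus_diag in Hzero.
  assert (Ha : 0 < a) by nra.
  exists (a + b). split; [lra|]. intros d Hd.
  assert (Hle := value_ge_Uins al f w Ra v Hv (pstar + d) I0 ltac:(lra) ltac:(lra)).
  assert (Hq := Hgain (pstar + d)). nra.
Qed.

(* Part (1): [v] is affine near [p], so [VoI] vanishes for small [eps]. *)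
Lemma voi_below_threshold (p : R) : 0 < p < pstar ->
  exists delta, 0 < delta /\ forall eps, 0 < eps < delta -> VoI v p eps = 0.
Proof.
  intros Hp. exists (Rmin p (pstar - p)). split; [apply Rmin_pos; lra|].
  intros eps [He Hd].
  assert (H1 := Rmin_l p (pstar - p)). assert (H2 := Rmin_r p (pstar - p)).
  unfold VoI. rewrite !value_below_threshold by lra. unfold U0. field.
Qed.

(* Part (2): at the threshold, [VoI] is half the right chord slope of the excess
   [v - U0] times [eps]; these slopes decrease to a limit [L >= D > 0]. *)
Lemma voi_at_threshold : exists C, 0 < C /\
  asymp_equiv_0plus (fun eps => VoI v pstar eps) (fun eps => C * eps).
Proof.
  assert (Hps : 0 < pstar < 1) by apply Hthr.
  destruct gain_slope_at_threshold as [D [HD Hslope]].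
  set (G := fun d => (v (pstar + d) - U0 w Ra (pstar + d)) / d).
  assert (Hmono : forall e d, 0 < e <= d -> d < 1 - pstar -> G e <= G d).
  { intros e d He Hd.
    assert (H := convex_chord_slope 0 1 _ pstar e d (excess_convex al f w Ra v Hv)
                   ltac:(lra) ltac:(lra) He).
    cbv beta in H. rewrite value_at_threshold, Rminus_diag, !Rminus_0_r in H. exact H. }
  assert (Hlow : forall d, 0 < d < 1 - pstar -> D <= G d).
  { intros d Hd. apply Rle_div_r; [lra|]. apply Hslope. lra. }
  destruct (monotone_right_limit G (1 - pstar) D ltac:(lra) Hmono Hlow) as [L [HDL Hlim]].
  exists (L / 2). split; [lra|].
  apply asymp_equiv_of_rel_error; [intros eps He; nra|].
  intros eta Heta.
  destruct (Hlim (eta * L)) as [delta [Hdelta Hnear]]; [nra|].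
  exists (Rmin delta pstar). split; [apply Rmin_pos; lra|].
  intros eps [He Hd].
  assert (H1 := Rmin_l delta pstar). assert (H2 := Rmin_r delta pstar).
  assert (Hvoi : VoI v pstar eps = G eps * eps / 2).
  { unfold VoI, G. rewrite (value_below_threshold (pstar - eps)), value_at_threshold by lra.
    unfold U0. field. lra. }
  rewrite Hvoi.
  destruct (Hnear eps ltac:(lra)) as [HGl HGu].
  rewrite Rabs_right by nra. nra.
Qed.

(* Part (3): above the threshold, [VoI] is [- K/2] times the symmetric second difference
   of [phi], which is [phi'' p eps^2 + o(eps^2)] with [phi'' p < 0]. *)
Lemma voi_above_threshold (p : R) : pstar < p < 1 -> exists C, 0 < C /\
  asymp_equiv_0plus (fun eps => VoI v p eps) (fun eps => C * eps ^ 2).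
Proof.
  intros Hp. assert (Hps : 0 < pstar < 1) by apply Hthr.
  set (K := Kconst al f w Ra).
  assert (HK : 0 < K) by (apply Kconst_pos; lra).
  assert (Hphi2 := phi2_neg al p Hal ltac:(lra)).
  exists (- (K / 2) * phi2 al p).
  assert (HC : 0 < K / 2 * - phi2 al p) by (apply Rmult_lt_0_compat; lra).
  split; [lra|].
  apply asymp_equiv_of_rel_error; [intros eps He; assert (0 < eps ^ 2) by (apply pow_lt; lra); nra|].
  intros eta Heta.
  set (r := Rmin (p - pstar) (1 - p)).
  assert (Hr1 : r <= p - pstar) by apply Rmin_l. assert (Hr2 : r <= 1 - p) by apply Rmin_r.
  assert (Hr : 0 < r) by (apply Rmin_pos; lra).
  destruct (symmetric_second_difference (phi al) (phi1 al) (phi2 al) p r Hr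
              ltac:(intros t Ht; apply phi_derive; lra)
              ltac:(intros t Ht; apply phi1_derive; lra)
              (phi2_continuous al p ltac:(lra)) (eta * - phi2 al p) ltac:(nra))
    as [delta [Hdelta Hsd]].
  exists (Rmin delta r). split; [apply Rmin_pos; lra|].
  intros eps [He Hd].
  assert (H1 := Rmin_l delta r). assert (H2 := Rmin_r delta r).
  assert (Hvoi : VoI v p eps = - (K / 2) * (phi al (p + eps) + phi al (p - eps) - 2 * phi al p)).
  { unfold VoI. rewrite !value_above_threshold by lra. fold K. field. }
  rewrite Hvoi.
  specialize (Hsd eps ltac:(lra)).
  replace (- (K / 2) * (phi al (p + eps) + phi al (p - eps) - 2 * phi al p)
           - - (K / 2) * phi2 al p * eps ^ 2)
    with (- (K / 2) * (phi al (p + eps) + phi al (p - eps) - 2 * phi al p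
                       - phi2 al p * eps ^ 2)) by ring.
  rewrite Rabs_mult, Rabs_left by lra.
  nra.
Qed.

End Threshold.

Theorem proposition4p2 (alpha f w Ra : R) (v : R -> R) (pstar p : R) :
  0 < alpha < 1 -> 0 < f -> 0 < w -> 0 < Ra ->
  is_value_function alpha f w Ra v ->
  is_threshold alpha f w Ra pstar ->
  0 < p < 1 ->
  (p < pstar -> exists delta, 0 < delta /\
      forall eps, 0 < eps < delta -> VoI v p eps = 0) /\
  (p = pstar -> exists C, 0 < C /\
      asymp_equiv_0plus (fun eps => VoI v p eps) (fun eps => C * eps)) /\
  (pstar < p -> exists C, 0 < C /\
      asymp_equiv_0plus (fun eps => VoI v p eps) (fun eps => C * eps ^ 2)).
Proof.
  intros Hal Hf _ HRa Hv Hthr Hp. split; [|split].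
  - intros Hlt. apply (voi_below_threshold alpha f w Ra v pstar Hv Hthr p). lra.
  - intros ->. exact (voi_at_threshold alpha f w Ra v pstar Hal Hf HRa Hv Hthr).
  - intros Hgt. apply (voi_above_threshold alpha f w Ra v pstar Hal HRa Hv Hthr p). lra.
Qed.
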